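(* Let $p>3$ be a prime, let $G=\mathbb{Z}/p\mathbb{Z}$, and let $U=u_1u_2u_3$ and $V=v_1v_2v_3$ be sequences over $G$ each consisting of three distinct elements. Let $U\cdot V=\{\sum_{i=1}^3 u_i v_{\sigma(i)} : \sigma \text{ a permutation of } \{1,2,3\}\}\subseteq G$. Then $|U\cdot V|\geq 4$. Furthermore, if $p>7$ and $|U\cdot V|=4$, then $U\cdot V$ is not an arithmetic progression, and either both $\{u_1,u_2,u_3\}$ and $\{v_1,v_2,v_3\}$ are arithmetic progressions, or else there exist affine transformations $\varphi,\psi$ of $G$ (maps $z\mapsto \alpha z+\beta$ with $\alpha,\beta\in G$, $\alpha\neq 0$) such that $\varphi(\{u_1,u_2,u_3\})=\{0,1,x\}$ and $\psi(\{v_1,v_2,v_3\})=\{0,1,y\}$, where $x$ and $y$ are the two distinct roots of $z^2-z+1$ in $\mathbb{Z}/p\mathbb{Z}$.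
   Context: A subset $A\subseteq \mathbb{Z}/p\mathbb{Z}$ is an arithmetic progression if $A=\{a,a+d,\ldots,a+(k-1)d\}$ for some $a\in \mathbb{Z}/p\mathbb{Z}$, some nonzero $d$ (the difference), and $k=|A|$. Multiplication is that of the ring $\mathbb{Z}/p\mathbb{Z}$. *)

From mathcomp Require Import all_boot all_order all_algebra all_fingroup.
Set Implicit Arguments. Unset Strict Implicit. Unset Printing Implicit Defensive.
Import GRing.Theory.
Local Open Scope ring_scope.

Definition prodset (R : finNzRingType) (u v : 'I_3 -> R) : {set R} :=
  [set \sum_(i < 3) u i * v (s i) | s : 'S_3].

Definition is_AP (R : finNzRingType) (A : {set R}) : Prop :=
  exists a d : R, d != 0 /\ A = [set a + (val i)%:R * d | i : 'I_#|A|].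

Definition affine_image (R : finNzRingType) (alpha beta : R) (A : {set R}) : {set R} :=
  [set alpha * z + beta | z in A].

From mathcomp Require Import all_boot all_order all_algebra all_fingroup.
From mathcomp Require Import ring zify.

(* Affine changes of the u_i and of the v_j act on U.V by affine maps, so we may
   assume U = {0, 1, x} and V = {0, 1, y} with x, y outside {0, 1}.  Then U.V is
   the disjoint union of the triples {1, xy, x + y} and {x, y, 1 + xy}.  A triple
   collapses to a point only when x is a root of z^2 - z + 1 and y is 1 - x or x,
   and then the other triple has three elements; hence |U.V| >= 4.  When
   |U.V| = 4 and no triple collapses, each triple has exactly one coincidence, and
   the nine possible pairs of coincidences force x, y in {2, -1, 1/2}, i.e. U and V
   are progressions.  In each case U.V is then an explicit set of integer
   combinations a + b x, and a three-term progression in it would make a nonzero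
   integer of absolute value below 10 vanish modulo p: the defect itself, or its
   norm a^2 + ab + b^2 when x is a root of z^2 - z + 1.  This is impossible for a
   prime p > 7. *)

Set Implicit Arguments.
Unset Strict Implicit.

Import GRing.Theory.
Local Open Scope ring_scope.

Lemma prime_gt10_of_gt7 p : prime p -> (7 < p)%N -> (10 < p)%N.
Proof.
move=> p_pr p7; rewrite ltnNge; apply/negP => p10.
have : [|| p == 8, p == 9 | p == 10]%N by lia.
by case/or3P=> /eqP pE; rewrite pE in p_pr.
Qed.

Lemma neq_of_subr (V : zmodType) (a b c : V) : a - b = c -> c != 0 -> a != b.
Proof. by move=> abc c0; rewrite -subr_eq0 abc. Qed.

Lemma sqr_eq1_neq1 (R : idomainType) (z : R) : z != 1 -> z * z = 1 -> z = -1.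
Proof. by move=> z1 /eqP; rewrite -expr2 sqrf_eq1 (negbTE z1) => /eqP. Qed.

Lemma sqr_eq_double (R : idomainType) (z : R) : z != 0 -> z * z = z + z -> z = 2%:R.
Proof. by move=> z0 zz; apply: (mulfI z0); rewrite zz mulr_natr mulr2n. Qed.

Definition o0 : 'I_3 := @Ordinal 3 0 isT.
Definition o1 : 'I_3 := @Ordinal 3 1 isT.
Definition o2 : 'I_3 := @Ordinal 3 2 isT.

Lemma ord3P (i : 'I_3) : [\/ i = o0, i = o1 | i = o2].
Proof.
by case: i => [[|[|[|//]]] lti]; [apply: Or31 | apply: Or32 | apply: Or33]; apply: val_inj.
Qed.

Lemma big_ord3 (R : nmodType) (F : 'I_3 -> R) : \sum_(i < 3) F i = F o0 + F o1 + F o2.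
Proof.
by rewrite !big_ord_recl big_ord0 addr0 addrA; congr (F _ + F _ + F _); apply: val_inj.
Qed.

Lemma imset_ord3 (T : finType) (f : 'I_3 -> T) :
  [set f i | i : 'I_3] = [set f o0; f o1; f o2].
Proof.
apply/setP => z; rewrite !inE; apply/imsetP/idP => [[i _ ->]|].
  by case: (ord3P i) => ->; rewrite eqxx ?orbT.
by rewrite -orbA => /or3P[] /eqP ->; eexists.
Qed.

Lemma perm_ord3 (j k : 'I_3) : j != k -> exists s : 'S_3, s o1 = j /\ s o2 = k.
Proof.
move=> jk; set a := tperm o1 j o2.
exists (tperm o1 j * tperm a k)%g; rewrite !permM tpermL -/a tpermL; split => //.
apply: tpermD; last by rewrite eq_sym.
by rewrite -[X in _ != X](tpermL o1 j) (inj_eq perm_inj).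
Qed.

Lemma set3_rot (T : finType) (a b c : T) : [set a; b; c] = [set c; a; b].
Proof. by apply/setP => z; rewrite !inE; do 3 case: (z == _). Qed.

Lemma cards3 (T : finType) (a b c : T) :
  #|[set a; b; c]| = (((c != a) && (c != b)) + (a != b).+1)%N.
Proof. by rewrite setUC cardsU1 cards2 !inE negb_or. Qed.

Lemma cards3_gt1 (T : finType) (a b c : T) :
  ~~ ((a == b) && (a == c)) -> (1 < #|[set a; b; c]|)%N.
Proof.
rewrite cards3; case: (eqVneq a b) => [<- /= ac|_ _]; last by rewrite addn2.
by rewrite eq_sym ac.
Qed.

Lemma cards3_lt3 (T : finType) (a b c : T) :
  (#|[set a; b; c]| < 3)%N -> [|| a == b, a == c | b == c].
Proof.
rewrite cards3; case: (eqVneq a b) => //= ab.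
by rewrite ![c == _]eq_sym; case: (a =P c); case: (b =P c).
Qed.

Lemma cards3_eq3 (T : finType) (a b c : T) :
  a != b -> a != c -> b != c -> #|[set a; b; c]| = 3%N.
Proof. by move=> ab ac bc; rewrite cards3 ab ![c == _]eq_sym ac bc. Qed.

Section NormalForm.
Variable F : finFieldType.
Implicit Types (A : {set F}) (a b c d x y : F).

Lemma affine_image_comp a b c d A :
  affine_image a b (affine_image c d A) = affine_image (a * c) (a * d + b) A.
Proof. by rewrite /affine_image -imset_comp; apply: eq_imset => z /=; ring. Qed.

Lemma affine_imageK a b A :
  a != 0 -> affine_image a^-1 (- (a^-1 * b)) (affine_image a b A) = A.
Proof.
move=> a0; rewrite affine_image_comp mulVf // subrr /affine_image.
by rewrite (eq_imset (g := id)) ?imset_id // => z; rewrite mul1r addr0.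
Qed.

Lemma card_affine_image a b A : a != 0 -> #|affine_image a b A| = #|A|.
Proof. by move=> a0; rewrite card_imset // => z w /addIr /(mulfI a0). Qed.

Lemma affine_image_AP a b A : a != 0 -> is_AP A -> is_AP (affine_image a b A).
Proof.
move=> a0 [e [d [d0 eA]]]; exists (a * e + b), (a * d); split; first by rewrite mulf_neq0.
rewrite card_affine_image // {1}eA /affine_image -imset_comp.
by apply: eq_imset => i /=; ring.
Qed.

Lemma is_AP_affine_image a b A : a != 0 -> is_AP (affine_image a b A) <-> is_AP A.
Proof.
move=> a0; split; last exact: affine_image_AP.
by move/(@affine_image_AP a^-1 (- (a^-1 * b)) _ (invr_neq0 a0)); rewrite affine_imageK.
Qed.

Lemma imset_affine (I : finType) (t u : I -> F) a b :
  u =1 (fun i => a * t i + b) -> [set u i | i : I] = affine_image a b [set t i | i : I].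
Proof. by move=> ut; rewrite /affine_image -imset_comp; apply: eq_imset. Qed.

Lemma affine_image_reflect01 x : affine_image (-1) 1 [set 0; 1; x] = [set 0; 1; 1 - x].
Proof.
apply/setP => z; rewrite /affine_image !imsetU !imset_set1 !inE.
by rewrite mulr0 add0r !mulN1r addNr [- x + 1]addrC; do 3 case: (z == _).
Qed.

Lemma affine_normal_conj x y c d : c != 0 -> y = 1 - x \/ y = x ->
  exists gamma delta, gamma != 0 /\
    affine_image gamma delta (affine_image c d [set 0; 1; y]) = [set 0; 1; 1 - x].
Proof.
move=> c0 [->|->].
  by exists c^-1, (- (c^-1 * d)); rewrite affine_imageK ?invr_neq0.
exists (-1 * c^-1), (-1 * - (c^-1 * d) + 1).
by rewrite -affine_image_comp affine_imageK // affine_image_reflect01 mulN1r oppr_eq0 invr_neq0.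
Qed.

Lemma affine_normal (u : 'I_3 -> F) : injective u ->
  exists a b (t : 'I_3 -> F),
    [/\ a != 0, t o0 = 0, t o1 = 1, injective t & u =1 (fun i => a * t i + b)].
Proof.
move=> u_inj; have a0 : u o1 - u o0 != 0 by rewrite subr_eq0 (inj_eq u_inj).
exists (u o1 - u o0), (u o0), (fun i => (u i - u o0) / (u o1 - u o0)).
split; [by [] | by rewrite subrr mul0r | by rewrite divff | | by move=> i; field].
by move=> i j /(mulIf (invr_neq0 a0)) /addIr /u_inj.
Qed.

Lemma prodset_affine (u v t s : 'I_3 -> F) a b c d :
  u =1 (fun i => a * t i + b) -> v =1 (fun i => c * s i + d) ->
  exists K, prodset u v = affine_image (a * c) K (prodset t s).
Proof.
move=> ut vs; exists (a * d * \sum_i t i + b * c * \sum_i s i + b * d *+ 3).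
rewrite /prodset /affine_image -imset_comp; apply: eq_imset => σ /=.
have -> : \sum_i s i = \sum_i s (σ i) by rewrite (reindex_inj (@perm_inj _ σ)).
under eq_bigr => i _ do rewrite ut vs.
have -> : b * d *+ 3 = \sum_(i < 3) b * d by rewrite sumr_const card_ord.
by rewrite !mulr_sumr -!big_split /=; apply: eq_bigr => i _; ring.
Qed.

(* The ascription on 1 gives all six singletons the same finType instance, which
   the cardinality computations below rely on. *)
Definition prodset01 x y : {set F} :=
  [set (1 : F); x * y; x + y] :|: [set x; y; 1 + x * y].

Lemma prodset_normal (u v : 'I_3 -> F) :
  u o0 = 0 -> u o1 = 1 -> v o0 = 0 -> v o1 = 1 -> prodset u v = prodset01 (u o2) (v o2).
Proof.
move=> u0 u1 v0 v1.
have sumE (s : 'S_3) : \sum_(i < 3) u i * v (s i) = v (s o1) + u o2 * v (s o2).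
  by rewrite big_ord3 u0 u1 mul0r mul1r add0r.
have mem j k : j != k -> v j + u o2 * v k \in prodset u v.
  by case/perm_ord3=> s [sj sk]; apply/imsetP; exists s; rewrite // sumE sj sk.
apply/eqP; rewrite eqEsubset /prodset01; apply/andP; split; apply/subsetP => z.
  case/imsetP=> s _ ->; rewrite sumE; have : s o1 != s o2 by rewrite (inj_eq perm_inj).
  by case: (ord3P (s o1)) => ->; case: (ord3P (s o2)) => -> //= _;
    rewrite !inE ?v0 ?v1 ?mulr0 ?mulr1 ?addr0 ?add0r ?[v o2 + _]addrC eqxx ?orbT.
rewrite !inE => /orP[/orP[/orP[]|]|/orP[/orP[]|]] /eqP -> {z}.
- by have := mem o1 o0 isT; rewrite v1 v0 mulr0 addr0.
- by have := mem o0 o2 isT; rewrite v0 add0r.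
- by have := mem o2 o1 isT; rewrite v1 mulr1 addrC.
- by have := mem o0 o1 isT; rewrite v0 v1 add0r mulr1.
- by have := mem o2 o0 isT; rewrite v0 mulr0 addr0.
- by have := mem o1 o2 isT; rewrite v1.
Qed.

Lemma prodset_normal_form (u v : 'I_3 -> F) : injective u -> injective v ->
  exists x y a b c d K, [/\ [/\ a != 0, x != 0 & x != 1], [/\ c != 0, y != 0 & y != 1],
    [set u i | i : 'I_3] = affine_image a b [set 0; 1; x],
    [set v i | i : 'I_3] = affine_image c d [set 0; 1; y] &
    prodset u v = affine_image (a * c) K (prodset01 x y)].
Proof.
move=> /affine_normal[a [b [t [a0 t0 t1 t_inj ut]]]].
move=> /affine_normal[c [d [s [c0 s0 s1 s_inj vs]]]].
have [K uvE] := prodset_affine ut vs; rewrite (prodset_normal t0 t1 s0 s1) in uvE.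
exists (t o2), (s o2), a, b, c, d, K; split => //.
- by split; rewrite // -?t0 -?t1 (inj_eq t_inj).
- by split; rewrite // -?s0 -?s1 (inj_eq s_inj).
- by rewrite (imset_affine ut) imset_ord3 t0 t1.
- by rewrite (imset_affine vs) imset_ord3 s0 s1.
Qed.

End NormalForm.

Section ThreeTermProgressions.
Variable F : finFieldType.

Lemma AP_three_terms (S : {set F}) : (3 <= #|S|)%N -> is_AP S ->
  exists s0 s1 s2,
    [/\ s0 \in S, s1 \in S, s2 \in S, s0 != s1 & s0 != s2] /\ s0 + s2 = s1 *+ 2.
Proof.
move=> S3 [a [d [_ eS]]]; set f := fun i : 'I_#|S| => a + (val i)%:R * d.
have f_inj : injective f.
  by move=> i j; apply: (@imset_injP _ _ f predT); rewrite // -eS card_ord.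
have fS i : f i \in S by move/setP/(_ (f i)): eS => ->; apply/imsetP; exists i.
have S1 := ltnW S3; have S0 := ltnW S1.
exists (f (Ordinal S0)), (f (Ordinal S1)), (f (Ordinal S3)); split; last by rewrite /f /=; ring.
by split; rewrite ?fS ?(inj_eq f_inj).
Qed.

Lemma not_AP_of_3AP_free (T : eqType) (f : T -> F) (s : seq T) (S : {set F}) :
  (3 <= #|S|)%N -> {subset S <= map f s} ->
  (forall t1 t2 t3, t1 \in s -> t2 \in s -> t3 \in s -> t1 != t2 -> t1 != t3 ->
     f t1 + f t3 != f t2 *+ 2) ->
  ~ is_AP S.
Proof.
move=> S3 Ss free /(AP_three_terms S3) [s0 [s1 [s2 [[s0S s1S s2S s01 s02] AP3]]]].
have [t0 t0s e0] := mapP (Ss _ s0S).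
have [t1 t1s e1] := mapP (Ss _ s1S).
have [t2 t2s e2] := mapP (Ss _ s2S).
rewrite {}e0 {}e1 {}e2 in s01 s02 AP3.
have t01 : t0 != t1 by apply: contra_neq s01 => ->.
have t02 : t0 != t2 by apply: contra_neq s02 => ->.
by move/eqP: AP3; apply/negP; exact: free.
Qed.

End ThreeTermProgressions.

(* Certificates that a list of integers, or of pairs (a, b) standing for a + b x
   with x a root of z^2 - z + 1, contains no three-term progression with distinct
   ends: the defect i + k - 2 j, or its norm a^2 + ab + b^2, is nonzero and below
   10 in absolute value, hence nonzero in characteristic p > 10. *)
Definition small_int (n : int) : bool := (0 < `|n| < 10)%N.

Definition int_ap_free (s : seq int) : bool :=
  all (fun i => all (fun j => all (fun k =>
    [|| i == j, i == k | small_int (i + k - j *+ 2)]) s) s) s.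

Definition int_comb (R : nzRingType) (x : R) (t : int * int) : R := t.1%:~R + t.2%:~R * x.

Definition eisenstein_norm (t : int * int) : int := t.1 ^+ 2 + t.1 * t.2 + t.2 ^+ 2.

Definition eisenstein_ap_free (s : seq (int * int)) : bool :=
  all (fun i => all (fun j => all (fun k => [|| i == j, i == k |
    small_int (eisenstein_norm (i.1 + k.1 - j.1 *+ 2, i.2 + k.2 - j.2 *+ 2))]) s) s) s.

Section SmallCharacteristic.
Variables (F : finFieldType) (p : nat).
Hypothesis pcharFp : p \in [pchar F].

Lemma intr_neq0_lt (z : int) : (0 < `|z| < p)%N -> z%:~R != 0 :> F.
Proof.
case/andP=> z0 zp; rewrite -(dvdz_pcharf pcharFp).
by apply: contraTN zp => /(dvdn_leq z0); rewrite -leqNgt.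
Qed.

Hypothesis p_gt3 : (3 < p)%N.

Lemma two_neq0 : 2%:R != 0 :> F.
Proof. by have := @intr_neq0_lt 2%N; rewrite /= ltnW //; apply. Qed.

Lemma three_neq0 : 3%:R != 0 :> F.
Proof. by have := @intr_neq0_lt 3%N; rewrite /= p_gt3; apply. Qed.

Lemma sixth_root_neq (x : F) : x ^+ 2 = x - 1 -> [/\ x != 2%:R, x != -1 & x + x != 1].
Proof.
move=> hx; split; apply: contra_neq three_neq0 => ex.
- by rewrite -(subrr (x ^+ 2)) {2}hx ex; ring.
- by rewrite -(subrr (x ^+ 2)) {2}hx ex; ring.
rewrite (_ : 3%:R = (x ^+ 2 - (x - 1)) *+ 4 - (x + x - 1) ^+ 2); last by ring.
by rewrite hx ex !subrr mul0rn expr0n sub0r oppr0.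
Qed.

Lemma sixth_root_conj (x : F) : x ^+ 2 = x - 1 ->
  [/\ x != 1 - x, x ^+ 2 - x + 1 = 0 & (1 - x) ^+ 2 - (1 - x) + 1 = 0].
Proof.
move=> hx; have [_ _ xx1] := sixth_root_neq hx; split; try by ring: hx.
by apply: (neq_of_subr (c := x + x - 1)); [ring | rewrite subr_eq0].
Qed.

(* The three values of x for which {0, 1, x} is an arithmetic progression. *)
Definition harmonic (x : F) := [\/ x = 2%:R, x = -1 | x = 2%:R^-1].

Lemma half_eq (x : F) : x + x = 1 -> x = 2%:R^-1.
Proof.
by move=> xx; apply: (mulfI two_neq0); rewrite mulfV ?two_neq0 // mulr_natl mulr2n.
Qed.

Lemma is_AP_set3 (a b c : F) : a != b -> a + c = b *+ 2 -> is_AP [set a; b; c].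
Proof.
move=> ab abc; have ec : c = b *+ 2 - a by rewrite -abc addrC addKr.
have ba : b - a != 0 by rewrite subr_eq0 eq_sym.
have ac : a != c.
  apply: (neq_of_subr (c := - ((b - a) * 2%:R))); first by rewrite ec; ring.
  by rewrite oppr_eq0 mulf_neq0 ?two_neq0.
have bc : b != c.
  by apply: (neq_of_subr (c := - (b - a))); [rewrite ec; ring | rewrite oppr_eq0].
exists a, (b - a); split => //.
by rewrite cards3_eq3 // imset_ord3 /= ec; congr [set _; _; _]; ring.
Qed.

Lemma harmonic_AP (x : F) : harmonic x -> is_AP [set 0; 1; x].
Proof.
case=> ->.
- by apply: is_AP_set3; [rewrite eq_sym oner_neq0 | ring].
- by rewrite set3_rot; apply: is_AP_set3; [rewrite oppr_eq0 oner_neq0 | ring].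
rewrite 2!set3_rot; apply: is_AP_set3.
  apply: (neq_of_subr (c := 2%:R^-1)); last by rewrite invr_neq0 ?two_neq0.
  by field; exact: two_neq0.
by rewrite addr0 -(mulr_natr 2%:R^-1) mulVf ?two_neq0.
Qed.

Lemma harmonic_of_coincidences_l (x y : F) : x != 0 -> x != 1 ->
  [|| 1 == x * y, 1 == x + y | x * y == x + y] -> [|| x == y | x == 1 + x * y] ->
  harmonic x /\ harmonic y.
Proof.
move=> x0 x1 /or3P[] /eqP P /orP[] /eqP Q.
- have ex : x = -1 by apply: sqr_eq1_neq1; rewrite // {2}Q -P.
  by rewrite -Q ex; split; apply: Or32.
- have ex : x = 2%:R by rewrite Q -P.
  split; [exact: Or31 | apply: Or33; apply: half_eq].
  by rewrite P ex mulr_natl mulr2n.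
- have ex : x = 2%:R^-1 by apply: half_eq; rewrite {2}Q -P.
  by rewrite -Q ex; split; apply: Or33.
- have ey : y = 1 - x by rewrite P addrC addKr.
  have ex : x = -1.
    apply: sqr_eq1_neq1 => //; apply: subr0_eq.
    rewrite (_ : _ - _ = - (1 + x * y - x)); last by rewrite ey; ring.
    by rewrite -Q subrr oppr0.
  by split; [exact: Or32 | apply: Or31; rewrite ey ex; ring].
- have ex : x = 2%:R by apply: sqr_eq_double; rewrite // {2}Q P -Q.
  by rewrite -Q ex; split; apply: Or31.
have ey : y = -1.
  apply: subr0_eq; rewrite (_ : _ - _ = - (x - (1 + x * y))); last by rewrite P; ring.
  by rewrite -Q subrr oppr0.
split; [apply: Or33; apply: half_eq | exact: Or32].
apply: subr0_eq; rewrite (_ : _ - _ = x + y - x * y); last by rewrite ey; ring.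
by rewrite P subrr.
Qed.

Section Prodset01Card.
Variables x y : F.
Hypotheses (x0 : x != 0) (x1 : x != 1) (y0 : y != 0) (y1 : y != 1).
Local Notation A := [set 1; x * y; x + y].
Local Notation B := [set x; y; 1 + x * y].

Lemma card_prodset01 : #|prodset01 x y| = (#|A| + #|B|)%N.
Proof.
rewrite /prodset01 cardsU (_ : _ :&: _ = set0) ?cards0 ?subn0 //.
have [x1' y1'] : x - 1 != 0 /\ y - 1 != 0 by rewrite !subr_eq0.
apply/setP => z; rewrite !inE; apply/negP.
case/andP=> /orP[/orP[]|] /eqP -> /orP[/orP[]|]; apply/negP.
- by rewrite eq_sym.
- by rewrite eq_sym.
- by apply: (neq_of_subr (c := - (x * y))); [ring | rewrite oppr_eq0 mulf_neq0].
- by apply: (neq_of_subr (c := x * (y - 1))); [ring | rewrite mulf_neq0].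
- by apply: (neq_of_subr (c := (x - 1) * y)); [ring | rewrite mulf_neq0].
- by apply: (neq_of_subr (c := - 1)); [ring | rewrite oppr_eq0 oner_neq0].
- by apply: (neq_of_subr (c := y)); [ring | ].
- by apply: (neq_of_subr (c := x)); [ring | ].
- by apply: (neq_of_subr (c := - ((x - 1) * (y - 1)))); [ring | rewrite oppr_eq0 mulf_neq0].
Qed.

Lemma prodset01_A_collapse : 1 = x * y -> 1 = x + y -> y = 1 - x /\ x ^+ 2 = x - 1.
Proof.
move=> exy1 sxy1; have ey : y = 1 - x by rewrite sxy1 addrC addKr.
split => //; apply: subr0_eq; rewrite (_ : _ - _ = 1 - x * y); last by rewrite ey; ring.
by rewrite -exy1 subrr.
Qed.

Lemma prodset01_B_collapse : x = y -> x = 1 + x * y -> y = x /\ x ^+ 2 = x - 1.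
Proof.
move=> exy ex; split => //; apply: subr0_eq.
rewrite (_ : _ - _ = 1 + x * y - x); last by rewrite -exy; ring.
by rewrite -ex subrr.
Qed.

Lemma card_B_of_A_collapse : 1 = x * y -> 1 = x + y -> #|B| = 3%N.
Proof.
move=> exy1 sxy1; have [ey hx] := prodset01_A_collapse exy1 sxy1.
have [x2 xN1 xx1] := sixth_root_neq hx.
rewrite ey; apply: cards3_eq3.
- by apply: (neq_of_subr (c := x + x - 1)); [ring | rewrite subr_eq0].
- by apply: (neq_of_subr (c := x - 2%:R)); [ring: hx | rewrite subr_eq0].
- by apply: (neq_of_subr (c := - (x + 1))); [ring: hx | rewrite oppr_eq0 addr_eq0].
Qed.

Lemma card_A_of_B_collapse : x = y -> x = 1 + x * y -> #|A| = 3%N.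
Proof.
move=> exy ex; have [ey hx] := prodset01_B_collapse exy ex.
have [x2 xN1 xx1] := sixth_root_neq hx.
rewrite ey; apply: cards3_eq3.
- by apply: (neq_of_subr (c := - (x - 2%:R))); [ring: hx | rewrite oppr_eq0 subr_eq0].
- by rewrite eq_sym.
- by apply: (neq_of_subr (c := - (x + 1))); [ring: hx | rewrite oppr_eq0 addr_eq0].
Qed.

Lemma harmonic_of_coincidences :
  [|| 1 == x * y, 1 == x + y | x * y == x + y] ->
  [|| x == y, x == 1 + x * y | y == 1 + x * y] -> harmonic x /\ harmonic y.
Proof.
move=> cA /or3P[xy | xB | yB].
- by apply: harmonic_of_coincidences_l; rewrite ?xy.
- by apply: harmonic_of_coincidences_l; rewrite ?xB ?orbT.
suff [] : harmonic y /\ harmonic x by [].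
by apply: harmonic_of_coincidences_l; rewrite // [y * x]mulrC ?[y + x]addrC ?yB ?orbT.
Qed.

Lemma card_prodset01_ge4 : (3 < #|prodset01 x y|)%N.
Proof.
rewrite card_prodset01.
case: (boolP ((1 == x * y) && (1 == x + y))) => [/andP[/eqP eA1 /eqP eA2]|nA].
  by rewrite card_B_of_A_collapse // -eA1 -eA2 cards3 eqxx.
case: (boolP ((x == y) && (x == 1 + x * y))) => [/andP[/eqP eB1 /eqP eB2]|nB].
  by rewrite card_A_of_B_collapse // -eB2 -eB1 cards3 eqxx.
exact: leq_add (cards3_gt1 nA) (cards3_gt1 nB).
Qed.

Lemma card_prodset01_eq4 : #|prodset01 x y| = 4%N ->
  (x ^+ 2 = x - 1 /\ (y = 1 - x \/ y = x)) \/ (harmonic x /\ harmonic y).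
Proof.
rewrite card_prodset01 => card4.
case: (boolP ((1 == x * y) && (1 == x + y))) => [/andP[/eqP eA1 /eqP eA2]|nA].
  by have [-> ?] := prodset01_A_collapse eA1 eA2; left; split; [|left].
case: (boolP ((x == y) && (x == 1 + x * y))) => [/andP[/eqP eB1 /eqP eB2]|nB].
  by have [-> ?] := prodset01_B_collapse eB1 eB2; left; split; [|right].
have sum4 m n : (m + n = 4 -> 1 < m -> 1 < n -> m < 3 /\ n < 3)%N by lia.
have [A3 B3] := sum4 _ _ card4 (cards3_gt1 nA) (cards3_gt1 nB).
by right; apply: harmonic_of_coincidences; [exact: cards3_lt3 A3 | exact: cards3_lt3 B3].
Qed.

End Prodset01Card.

Hypothesis p_gt10 : (10 < p)%N.

Lemma not_AP_int_multiples (g : F) (s : seq int) (S : {set F}) :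
  g != 0 -> int_ap_free s -> (3 <= #|S|)%N ->
  {subset S <= [seq n%:~R * g | n <- s]} -> ~ is_AP S.
Proof.
move=> g0 free S3 Ss; apply: (not_AP_of_3AP_free S3 Ss) => i j k si sj sk ij ik.
have /allP/(_ j sj)/allP/(_ k sk) := allP free i si.
rewrite (negbTE ij) (negbTE ik) => /andP[n0 n10].
rewrite -subr_eq0 (_ : _ - _ = (i + k - j *+ 2)%:~R * g); last by ring.
by rewrite mulf_neq0 // intr_neq0_lt // n0 (ltn_trans n10 p_gt10).
Qed.

Lemma int_comb_eq0 (x : F) (t : int * int) :
  x ^+ 2 = x - 1 -> int_comb x t = 0 -> (eisenstein_norm t)%:~R = 0 :> F.
Proof.
move=> hx t0; rewrite (_ : _%:~R = int_comb x t * (t.1%:~R + t.2%:~R - t.2%:~R * x)).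
  by rewrite t0 mul0r.
by rewrite /int_comb /eisenstein_norm; ring: hx.
Qed.

Lemma not_AP_int_comb (x : F) (s : seq (int * int)) (S : {set F}) :
  x ^+ 2 = x - 1 -> eisenstein_ap_free s -> (3 <= #|S|)%N ->
  {subset S <= [seq int_comb x t | t <- s]} -> ~ is_AP S.
Proof.
move=> hx free S3 Ss; apply: (not_AP_of_3AP_free S3 Ss) => i j k si sj sk ij ik.
have /allP/(_ j sj)/allP/(_ k sk) := allP free i si.
rewrite (negbTE ij) (negbTE ik) => /andP[n0 n10].
set d := (i.1 + k.1 - j.1 *+ 2, i.2 + k.2 - j.2 *+ 2) in n0 n10.
rewrite -subr_eq0 (_ : _ - _ = int_comb x d); last by rewrite /int_comb /=; ring.
apply: contraTneq isT => /(int_comb_eq0 hx)/eqP.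
by rewrite (negbTE (intr_neq0_lt _)) // n0 (ltn_trans n10 p_gt10).
Qed.

Ltac solve_mem_by tac :=
  rewrite /= ?inE; repeat (apply/orP; first [left; apply/eqP; solve [tac] | right]);
  apply/eqP; solve [tac].

Ltac prodset01_subset_by tac :=
  move=> z; rewrite /prodset01 !inE => /orP[/orP[/orP[]|]|/orP[/orP[]|]] /eqP ->; solve_mem_by tac.

Lemma prodset01_sixth_root_not_AP (x y : F) : x ^+ 2 = x - 1 -> y = 1 - x \/ y = x ->
  (3 <= #|prodset01 x y|)%N -> ~ is_AP (prodset01 x y).
Proof.
(* The two sets are {1, x, 1 - x, 2} and {1, x - 1, 2 x, x}. *)
move=> hx [->|->] S3.
- apply: (not_AP_int_comb (s := [:: (2, 0); (1, 0); (1, -1); (0, 1)]) hx) => //.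
  by prodset01_subset_by ltac:(rewrite /int_comb /=; ring: hx).
apply: (not_AP_int_comb (s := [:: (0, 1); (-1, 1); (1, 0); (0, 2)]) hx) => //.
by prodset01_subset_by ltac:(rewrite /int_comb /=; ring: hx).
Qed.

Lemma prodset01_harmonic_not_AP (x y : F) : harmonic x -> harmonic y ->
  (3 <= #|prodset01 x y|)%N -> ~ is_AP (prodset01 x y).
Proof.
have h1 : 1 != 0 :> F := oner_neq0 F.
have h0 : 2%:R^-1 != 0 :> F by rewrite invr_neq0 ?two_neq0.
pose s1 : seq int := [:: 1; 2; 4; 5]; pose s2 : seq int := [:: -2; -1; 1; 2].
(* Each set is g {1, 2, 4, 5} or g {-2, -1, 1, 2} with g among 1, 1/2, 1/4. *)
case=> ->; case=> -> S3.
- apply: (not_AP_int_multiples (s := s1) h1) => //; prodset01_subset_by ltac:(ring).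
- apply: (not_AP_int_multiples (s := s2) h1) => //; prodset01_subset_by ltac:(ring).
- apply: (not_AP_int_multiples (s := s1) h0) => //.
  by prodset01_subset_by ltac:(field; exact: two_neq0).
- apply: (not_AP_int_multiples (s := s2) h1) => //; prodset01_subset_by ltac:(ring).
- apply: (not_AP_int_multiples (s := s2) h1) => //; prodset01_subset_by ltac:(ring).
- apply: (not_AP_int_multiples (s := s2) h0) => //.
  by prodset01_subset_by ltac:(field; exact: two_neq0).
- apply: (not_AP_int_multiples (s := s1) h0) => //.
  by prodset01_subset_by ltac:(field; exact: two_neq0).
- apply: (not_AP_int_multiples (s := s2) h0) => //.
  by prodset01_subset_by ltac:(field; exact: two_neq0).
apply: (not_AP_int_multiples (s := s1) (mulf_neq0 h0 h0)) => //.
by prodset01_subset_by ltac:(field; exact: two_neq0).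
Qed.

End SmallCharacteristic.

Theorem lemma2p5 (p : nat) (hp : prime p) (hp3 : (3 < p)%N)
  (u v : 'I_3 -> 'F_p) (hu : injective u) (hv : injective v) :
  (4 <= #|prodset u v|)%N /\
  ((7 < p)%N -> #|prodset u v| = 4%N ->
     ~ is_AP (prodset u v) /\
     ((is_AP [set u i | i : 'I_3] /\ is_AP [set v i | i : 'I_3]) \/
      exists (x y alpha beta gamma delta : 'F_p),
        x != y /\ x ^+ 2 - x + 1 = 0 /\ y ^+ 2 - y + 1 = 0 /\
        alpha != 0 /\ gamma != 0 /\
        affine_image alpha beta [set u i | i : 'I_3] = [set 0; 1; x] /\
        affine_image gamma delta [set v i | i : 'I_3] = [set 0; 1; y])).
Proof.
have pcharFp := pchar_Fp hp.
have [x [y [a [b [c [d [K [[a0 x0 x1] [c0 y0 y1] U_aff V_aff ->]]]]]]]] :=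
  prodset_normal_form hu hv.
rewrite card_affine_image ?mulf_neq0 // is_AP_affine_image ?mulf_neq0 //.
split; first exact (card_prodset01_ge4 pcharFp hp3 x0 x1 y0 y1).
move=> /(prime_gt10_of_gt7 hp) p10 card4.
have S3 : (3 <= #|prodset01 x y|)%N by rewrite card4.
have [[hx hy] | [hx hy]] := card_prodset01_eq4 pcharFp hp3 x0 x1 y0 y1 card4.
  split; first exact (prodset01_sixth_root_not_AP pcharFp p10 hx hy S3).
  have [x_conj root_x root_conj] := sixth_root_conj pcharFp hp3 hx.
  have [gamma [delta [gamma0 V_conj]]] := affine_normal_conj d c0 hy.
  right; exists x, (1 - x), a^-1, (- (a^-1 * b)), gamma, delta.
  by rewrite U_aff V_aff affine_imageK ?invr_neq0.
split; first exact (prodset01_harmonic_not_AP pcharFp hp3 p10 hx hy S3).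
by left; rewrite U_aff V_aff !is_AP_affine_image //; split; exact: (harmonic_AP pcharFp hp3).
Qed.
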